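(* Let $A$ be a real $m\times n$ matrix, $\mathbf b\in\mathbb R^m$, $\mathbf c\in\mathbb R^n$ (row vector), such that the linear program $\max\mathbf c\mathbf x$ s.t. $A\mathbf x\le\mathbf b$, $\mathbf x\ge0$ has unique optimal primal and dual solutions $\mathbf x^*$, $\mathbf y^*$. Then for every primal feasible $\mathbf x$, \[ \|\mathbf x_{\bar U}\|\le\frac{\mathbf c(\mathbf x^*-\mathbf x)}{\beta_D(A,\mathbf b,\mathbf c)}. \]
   Context: The dual is $\min\mathbf y\mathbf b$ s.t. $\mathbf yA\ge\mathbf c$, $\mathbf y\ge0$. $U=\{i:x^*_i>0\}$, $\bar U$ its complement in $\{1,\dots,n\}$, $\mathbf x_{\bar U}$ the restriction of $\mathbf x$ to coordinates in $\bar U$, and $\beta_D(A,\mathbf b,\mathbf c)=\min_{i\in\bar U}(\mathbf y^*A_{:,i}-c_i)$, with $A_{:,i}$ the $i$th column of $A$. $\|\cdot\|$ is the Euclidean norm. *)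

From mathcomp Require Import all_boot all_order all_algebra.
From mathcomp Require Import reals.
Set Implicit Arguments. Unset Strict Implicit. Unset Printing Implicit Defensive.
Import Order.TTheory GRing.Theory Num.Theory.
Local Open Scope ring_scope.

Section LP.
Variables (R : realType) (m n : nat).
Variables (A : 'M[R]_(m, n)) (b : 'cV[R]_m) (c : 'rV[R]_n).

Definition primal_feasible (x : 'cV[R]_n) : Prop :=
  (forall i, (A *m x) i 0 <= b i 0) /\ (forall j, 0 <= x j 0).
Definition primal_value (x : 'cV[R]_n) : R := (c *m x) 0 0.
Definition primal_optimal (x : 'cV[R]_n) : Prop :=
  primal_feasible x /\ forall x', primal_feasible x' -> primal_value x' <= primal_value x.

Definition dual_feasible (y : 'rV[R]_m) : Prop :=
  (forall j, c 0 j <= (y *m A) 0 j) /\ (forall i, 0 <= y 0 i).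
Definition dual_value (y : 'rV[R]_m) : R := (y *m b) 0 0.
Definition dual_optimal (y : 'rV[R]_m) : Prop :=
  dual_feasible y /\ forall y', dual_feasible y' -> dual_value y <= dual_value y'.

Definition unique_primal_optimum (xs : 'cV[R]_n) : Prop :=
  primal_optimal xs /\ forall x, primal_optimal x -> x = xs.
Definition unique_dual_optimum (ys : 'rV[R]_m) : Prop :=
  dual_optimal ys /\ forall y, dual_optimal y -> y = ys.

(* Ubar = { i : x*_i = 0 } (complement of the support U of x* ) *)
Definition Ubar (xs : 'cV[R]_n) : pred 'I_n := fun i => ~~ (0 < xs i 0).

Definition norm_restr (xs x : 'cV[R]_n) : R :=
  Num.sqrt (\sum_(i < n | Ubar xs i) x i 0 ^+ 2).

(* beta_D = min_{i in Ubar} (y* A_{:,i} - c_i); convention 0 if Ubar is empty *)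
Definition betaD (xs : 'cV[R]_n) (ys : 'rV[R]_m) : R :=
  match [seq (ys *m col i A) 0 0 - c 0 i | i <- enum (Ubar xs)] with
  | [::] => 0
  | h :: t => foldr Num.min h t
  end.
End LP.

From mathcomp Require Import all_boot all_order all_algebra.
From mathcomp Require Import boolp reals ring lra.
Set Implicit Arguments. Unset Strict Implicit. Unset Printing Implicit Defensive.
Import Order.TTheory GRing.Theory Num.Theory.

(* For feasible x, the reduced costs r = y*A - c are nonnegative and
   r x = y*(A x) - c x <= y*b - c x = c x* - c x by strong duality.  On Ubar
   each r_j is at least betaD, so betaD * sum_{j in Ubar} x_j <= c (x* - x),
   and ||x_Ubar|| <= sum_{j in Ubar} x_j as x >= 0.  The point is that
   betaD > 0: by the Goldman-Tucker theorem, for every j some optimal x has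
   x_j > 0 or some optimal y has (y A)_j > c_j, and uniqueness of the optima
   forces the second case when x*_j = 0.  Strong duality and Goldman-Tucker
   both follow from Farkas' lemma, which in turn follows by Fourier-Motzkin
   elimination. *)

Section FoldrMin.
Local Open Scope order_scope.

Lemma foldr_min_mem d (T : orderType d) (h : T) (s : seq T) :
  foldr Order.min h s \in h :: s.
Proof.
elim: s => [|y s IH] /=; first by rewrite mem_head.
rewrite /Order.min; case: ifP => _; first by rewrite !inE eqxx orbT.
by move: IH; rewrite !inE => /orP[] ->; rewrite ?orbT.
Qed.

Lemma foldr_min_le d (T : orderType d) (h : T) (s : seq T) x :
  x \in h :: s -> foldr Order.min h s <= x.
Proof.
elim: s => [|y s IH] /=; first by rewrite inE => /eqP ->.
rewrite ge_min !inE => /or3P[xh|/eqP->|xs]; last by rewrite IH ?orbT // inE xs orbT.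
  by rewrite IH ?orbT // inE xh.
by rewrite lexx.
Qed.

End FoldrMin.

Local Open Scope ring_scope.

Section Farkas.
Variable R : realFieldType.

Definition lin_solvable (I J : finType) (a : I -> J -> R) (d : I -> R) :=
  exists x : J -> R, forall i, \sum_j a i j * x j <= d i.

Definition farkas_condition (I J : finType) (a : I -> J -> R) (d : I -> R) :=
  forall u : I -> R, (forall i, 0 <= u i) ->
  (forall j, \sum_i u i * a i j = 0) -> 0 <= \sum_i u i * d i.

Lemma exists_between (I : finType) (PL PU : pred I) (L U : I -> R) :
  (forall i k, PL i -> PU k -> L i <= U k) ->
  exists t, (forall i, PL i -> L i <= t) /\ (forall k, PU k -> t <= U k).
Proof.
move=> LU; case: (pickP PL) => [i0 PLi0 | PL0].
  have [i PLi maxL] := arg_maxP L PLi0.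
  by exists (L i); split => [j|k PUk]; [exact: maxL | exact: LU].
case: (pickP PU) => [k0 PUk0 | PU0].
  have [k PUk minU] := arg_minP U PUk0.
  by exists (U k); split => [j|]; [rewrite PL0 | exact: minU].
by exists 0; split => j; rewrite ?PL0 ?PU0.
Qed.

Section FourierMotzkinStep.
Variables (I : finType) (q : nat) (a : I -> 'I_q.+1 -> R) (d : I -> R).

Local Notation l i := (a i ord_max).
Local Notation w := (widen_ord (leqnSn q)).

(* Combining rows i (with l i > 0) and k (with l k < 0) with the weights
   (- l k, l i) eliminates the last variable; rows with l i = 0 are kept. *)
Definition fm_lam (p : I * I) : R :=
  if (0 < l p.1) && (l p.2 < 0) then - l p.2
  else ((p.1 == p.2) && (l p.1 == 0))%:R.

Definition fm_mu (p : I * I) : R :=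
  if (0 < l p.1) && (l p.2 < 0) then l p.1 else 0.

Definition fm_comb (f : I -> R) (p : I * I) := fm_lam p * f p.1 + fm_mu p * f p.2.

Definition fm_row (p : I * I) (j : 'I_q) := fm_comb (a^~ (w j)) p.

Lemma fm_lam_ge0 p : 0 <= fm_lam p.
Proof.
rewrite /fm_lam; case: ifP => [/andP[_ lk]|_]; last exact: ler0n.
by rewrite oppr_ge0 ltW.
Qed.

Lemma fm_mu_ge0 p : 0 <= fm_mu p.
Proof. by rewrite /fm_mu; case: ifP => [/andP[li _]|_]; [exact: ltW|]. Qed.

Lemma fm_comb_last p : fm_comb (a^~ ord_max) p = 0.
Proof.
rewrite /fm_comb /fm_lam /fm_mu /=; case: ifP => _; first ring.
rewrite mul0r addr0; case: (p.1 == p.2); last by rewrite mul0r.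
by case: eqP => [->|_]; rewrite ?mulr0 ?mul0r.
Qed.

Definition fm_pull (v : I * I -> R) (i : I) :=
  \sum_k v (i, k) * fm_lam (i, k) + \sum_k v (k, i) * fm_mu (k, i).

Lemma fm_pull_sum v f :
  \sum_i fm_pull v i * f i = \sum_p v p * fm_comb f p.
Proof.
rewrite /fm_pull /fm_comb.
under eq_bigr do rewrite mulrDl !mulr_suml.
under [RHS]eq_bigr do rewrite mulrDr.
rewrite big_split [RHS]big_split /=; congr (_ + _).
  by rewrite pair_big; apply: eq_bigr => -[i k] _ /=; ring.
by rewrite exchange_big pair_big; apply: eq_bigr => -[i k] _ /=; ring.
Qed.

Lemma fm_farkas_condition :
  farkas_condition a d -> farkas_condition fm_row (fm_comb d).
Proof.
move=> Hfc v v_ge0 v_row; rewrite -fm_pull_sum; apply: Hfc.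
  by move=> i; apply: addr_ge0; apply: sumr_ge0 => k _;
     apply: mulr_ge0; rewrite ?fm_lam_ge0 ?fm_mu_ge0.
move=> j; rewrite fm_pull_sum; case: (unliftP ord_max j) => [j'|] ->.
  have -> : lift ord_max j' = w j' by apply: val_inj; exact: lift_max.
  exact: v_row.
by rewrite big1 // => p _; rewrite fm_comb_last mulr0.
Qed.

Lemma fm_lin_solvable : lin_solvable fm_row (fm_comb d) -> lin_solvable a d.
Proof.
move=> [x' Hx'].
pose r i := d i - \sum_j a i (w j) * x' j.
have r_le i k : l i < 0 -> 0 < l k -> r i / l i <= r k / l k.
  move=> li lk; have := Hx' (k, i).
  rewrite /fm_row /fm_comb /fm_lam /fm_mu /= lk li /=.
  under eq_bigr do rewrite mulrDl -!mulrA.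
  rewrite big_split /= -!mulr_sumr => h.
  have h2 : l i * r k <= l k * r i by rewrite /r; lra.
  rewrite ler_pdivlMr // mulrAC ler_ndivrMr //; lra.
have [t [t_ge t_le]] := exists_between r_le.
exists (fun j => oapp x' t (insub (val j))) => i.
rewrite big_ord_recr /= insubN ?ltnn //=.
have -> : \sum_(j < q) a i (w j) * oapp x' t (insub (val (w j))) = d i - r i.
  by rewrite opprB addrC subrK; apply: eq_bigr => j _; rewrite valK.
case: (ltrgt0P (l i)) => li.
- by have := t_le i li; rewrite ler_pdivlMr //; lra.
- by have := t_ge i li; rewrite ler_ndivrMr //; lra.
- have := Hx' (i, i); rewrite /fm_row /fm_comb /fm_lam /fm_mu /= li ltxx !eqxx /=.
  under eq_bigr do rewrite mul0r addr0 mul1r.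
  rewrite mul0r addr0 mul1r /r; lra.
Qed.

End FourierMotzkinStep.

Lemma farkas_ord q (I : finType) (a : I -> 'I_q -> R) d :
  farkas_condition a d -> lin_solvable a d.
Proof.
elim: q I a d => [|q IH] I a d Hfc.
  exists (fun _ => 0) => i; rewrite big_ord0.
  have := Hfc (fun k => (k == i)%:R) (fun k => ler0n _ _).
  rewrite (bigD1 i) //= eqxx mul1r big1 ?addr0 => [|k /negbTE ->]; last exact: mul0r.
  by apply=> -[].
by apply/fm_lin_solvable/IH/fm_farkas_condition.
Qed.

Theorem farkas (I J : finType) (a : I -> J -> R) d :
  farkas_condition a d -> lin_solvable a d.
Proof.
move=> Hfc; have [|x Hx] := @farkas_ord #|J| I (fun i k => a i (enum_val k)) d.
  by move=> u u_ge0 u_col; apply: Hfc => // j; rewrite -(enum_rankK j) u_col.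
exists (x \o enum_rank) => i; rewrite big_enum_val /=.
by under eq_bigr do rewrite enum_valK; exact: Hx.
Qed.

Theorem farkas_nonneg (I J : finType) (a : I -> J -> R) (d : I -> R) :
  (exists x : J -> R, (forall j, 0 <= x j) /\ forall i, \sum_j a i j * x j <= d i)
  \/ (exists u : I -> R, [/\ forall i, 0 <= u i,
        forall j, 0 <= \sum_i u i * a i j & \sum_i u i * d i < 0]).
Proof.
rewrite orC -implyNp => no_certificate.
pose a' (i : I + J) j := match i with inl i => a i j | inr k => - (k == j)%:R end.
pose d' (i : I + J) := if i is inl i then d i else 0.
have [x Hx] : lin_solvable a' d'.
  apply: farkas => u u_ge0 u_col.
  rewrite big_sumType /= [X in _ + X]big1 ?addr0 => [|j _]; last exact: mulr0.
  rewrite leNgt; apply/negP => neg; apply: no_certificate.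
  exists (u \o inl); split=> [i|j|//]; first exact: u_ge0.
  have := u_col j; rewrite big_sumType /=.
  under [X in _ + X]eq_bigr do rewrite mulrN mulr_natr mulrb.
  by rewrite sumrN -big_mkcond big_pred1_eq => /eqP; rewrite subr_eq0 => /eqP ->.
exists x; split=> [j|i]; last by have := Hx (inl i).
have := Hx (inr j); rewrite /a' /d'.
under eq_bigr do rewrite mulNr mulr_natl mulrb eq_sym.
by rewrite sumrN -big_mkcond big_pred1_eq oppr_le0.
Qed.

End Farkas.

Lemma mulmx_colE (R : comPzRingType) p q (M : 'M[R]_(p, q)) (f : 'I_q -> R) k :
  (M *m \col_j f j) k 0 = \sum_j f j * M k j.
Proof. by rewrite mxE; apply: eq_bigr => j _; rewrite mxE mulrC. Qed.

Lemma row_mulmxE (R : comPzRingType) p q (M : 'M[R]_(p, q)) (f : 'I_p -> R) j :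
  (\row_k f k *m M) 0 j = \sum_k M k j * f k.
Proof. by rewrite mxE; apply: eq_bigr => k _; rewrite mxE mulrC. Qed.

Lemma sqrt_sum_sqr_le_sum (R : rcfType) (I : finType) (P : pred I) (f : I -> R) :
  (forall i, P i -> 0 <= f i) ->
  Num.sqrt (\sum_(i | P i) f i ^+ 2) <= \sum_(i | P i) f i.
Proof.
move=> f_ge0; set S := \sum_(i | P i) f i.
have S_ge0 : 0 <= S by exact: sumr_ge0.
rewrite -(ger0_norm S_ge0) -sqrtr_sqr ler_wsqrtr // [S ^+ 2]expr2 mulr_suml.
apply: ler_sum => i Pi; rewrite expr2 ler_wpM2l ?f_ge0 //.
by rewrite /S (bigD1 i) //= lerDl sumr_ge0 // => k /andP[Pk _]; exact: f_ge0.
Qed.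

Section LinearProgram.
Variables (R : realType) (m n : nat).
Variables (A : 'M[R]_(m, n)) (b : 'cV[R]_m) (c : 'rV[R]_n).

Lemma mulmx_le_dual_value (x : 'cV[R]_n) (y : 'rV[R]_m) :
  primal_feasible A b x -> (forall k, 0 <= y 0 k) ->
  (y *m A *m x) 0 0 <= dual_value b y.
Proof.
move=> [Ax_le _] y_ge0; rewrite -mulmxA /dual_value !(mxE _ _ 0 0).
by apply: ler_sum => k _; apply: ler_wpM2l.
Qed.

Lemma weak_duality (x : 'cV[R]_n) (y : 'rV[R]_m) :
  primal_feasible A b x -> dual_feasible A c y -> primal_value c x <= dual_value b y.
Proof.
move=> xF [yA_ge y_ge0]; apply: le_trans (mulmx_le_dual_value xF y_ge0).
rewrite /primal_value !(mxE _ _ 0 0); apply: ler_sum => j _.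
by apply: ler_wpM2r => //; case: xF.
Qed.

Lemma primal_feasible_mix (t : R) (xs x : 'cV[R]_n) : 0 <= t ->
  primal_feasible A b xs -> (forall j, 0 <= x j 0) ->
  (forall k, (A *m x) k 0 <= t * b k 0) ->
  primal_feasible A b ((1 + t)^-1 *: (x + xs)).
Proof.
move=> t_ge0 [Axs_le xs_ge0] x_ge0 Ax_le; have t1_gt0 : 0 < 1 + t by lra.
split=> [k|j].
  have := Axs_le k; have := Ax_le k.
  rewrite -scalemxAr mulmxDr !mxE ler_pdivrMl //; lra.
by rewrite !mxE; apply: mulr_ge0; [rewrite invr_ge0 ltW | apply: addr_ge0].
Qed.

Lemma primal_value_mix (s : R) (x xs : 'cV[R]_n) :
  primal_value c (s *: (x + xs)) = s * (primal_value c x + primal_value c xs).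
Proof. by rewrite /primal_value -scalemxAr mulmxDr !mxE. Qed.

Lemma dual_feasible_mix (t : R) (ys y : 'rV[R]_m) : 0 <= t ->
  dual_feasible A c ys -> (forall k, 0 <= y 0 k) ->
  (forall j, t * c 0 j <= (y *m A) 0 j) ->
  dual_feasible A c ((1 + t)^-1 *: (y + ys)).
Proof.
move=> t_ge0 [ysA_ge ys_ge0] y_ge0 yA_ge; have t1_gt0 : 0 < 1 + t by lra.
split=> [j|k].
  have := ysA_ge j; have := yA_ge j.
  rewrite -scalemxAl mulmxDl !mxE ler_pdivlMl //; lra.
by rewrite !mxE; apply: mulr_ge0; [rewrite invr_ge0 ltW | apply: addr_ge0].
Qed.

Lemma dual_value_mix (s : R) (y ys : 'rV[R]_m) :
  dual_value b (s *: (y + ys)) = s * (dual_value b y + dual_value b ys).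
Proof. by rewrite /dual_value -scalemxAl mulmxDl !mxE. Qed.

Lemma primal_ray_value_le (t : R) (xs x : 'cV[R]_n) : 0 <= t ->
  primal_optimal A b c xs -> (forall j, 0 <= x j 0) ->
  (forall k, (A *m x) k 0 <= t * b k 0) ->
  primal_value c x <= t * primal_value c xs.
Proof.
move=> t_ge0 [xsF xs_max] x_ge0 Ax_le; have t1_gt0 : 0 < 1 + t by lra.
have := xs_max _ (primal_feasible_mix t_ge0 xsF x_ge0 Ax_le).
rewrite primal_value_mix ler_pdivrMl //; lra.
Qed.

Lemma primal_ray_support (t : R) (xs x : 'cV[R]_n) j : 0 <= t ->
  primal_optimal A b c xs -> (forall j', 0 <= x j' 0) ->
  (forall k, (A *m x) k 0 <= t * b k 0) ->
  t * primal_value c xs <= primal_value c x -> 0 < x j 0 ->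
  exists2 x', primal_optimal A b c x' & 0 < x' j 0.
Proof.
move=> t_ge0 [xsF xs_max] x_ge0 Ax_le cx_ge xj_gt0; have t1_gt0 : 0 < 1 + t by lra.
exists ((1 + t)^-1 *: (x + xs)).
  split=> [|x' x'F]; first exact: primal_feasible_mix.
  apply: le_trans (xs_max _ x'F) _; rewrite primal_value_mix ler_pdivlMl //; lra.
have := xsF.2 j; rewrite !mxE => xsj_ge0.
by apply: mulr_gt0; [rewrite invr_gt0 | lra].
Qed.

Lemma dual_ray_slack (t : R) (ys y : 'rV[R]_m) j : 0 <= t ->
  dual_optimal A b c ys -> (forall k, 0 <= y 0 k) ->
  (forall j', t * c 0 j' <= (y *m A) 0 j') ->
  dual_value b y <= t * dual_value b ys -> t * c 0 j < (y *m A) 0 j ->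
  exists2 y', dual_optimal A b c y' & c 0 j < (y' *m A) 0 j.
Proof.
move=> t_ge0 [ysF ys_min] y_ge0 yA_ge yb_le yAj_gt; have t1_gt0 : 0 < 1 + t by lra.
exists ((1 + t)^-1 *: (y + ys)).
  split=> [|y' y'F]; first exact: dual_feasible_mix.
  apply: le_trans (ys_min _ y'F); rewrite dual_value_mix ler_pdivrMl //; lra.
rewrite -scalemxAl mulmxDl.
have -> : ((1 + t)^-1 *: (y *m A + ys *m A)) 0 j =
          (1 + t)^-1 * ((y *m A) 0 j + (ys *m A) 0 j) by rewrite !mxE.
by rewrite ltr_pdivlMl //; have := ysF.1 j; lra.
Qed.

Theorem strong_duality (xs : 'cV[R]_n) (ys : 'rV[R]_m) :
  primal_optimal A b c xs -> dual_optimal A b c ys ->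
  dual_value b ys = primal_value c xs.
Proof.
move=> xsO ysO; apply/eqP; rewrite eq_le weak_duality ?andbT; last first.
- exact: ysO.1.
- exact: xsO.1.
(* A solution y >= 0 of  - y A <= - c,  y b <= c xs  is dual feasible of value
   at most c xs; a certificate (x, t) >= 0 has  A x <= t b  and  t (c xs) < c x. *)
pose a (i : 'I_n + 'I_1) (k : 'I_m) := if i is inl j then - A k j else b k 0.
pose d (i : 'I_n + 'I_1) := if i is inl j then - c 0 j else primal_value c xs.
case: (farkas_nonneg a d) => [[y [y_ge0 Hy]] | [u [u_ge0 Hu Hd]]].
  have yF : dual_feasible A c (\row_k y k).
    split=> [j|k]; last by rewrite mxE.
    have := Hy (inl j); rewrite row_mulmxE.
    by under eq_bigr do rewrite mulNr; rewrite sumrN lerN2.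
  apply: le_trans (ysO.2 _ yF) _; rewrite /dual_value row_mulmxE.
  exact: Hy (inr ord0).
pose x : 'cV[R]_n := \col_j u (inl j).
have Ax_le k : (A *m x) k 0 <= u (inr ord0) * b k 0.
  have := Hu k; rewrite big_sumType big_ord1 /=.
  by under eq_bigr do rewrite mulrN; rewrite sumrN -mulmx_colE addrC subr_ge0.
have x_ge0 j : 0 <= x j 0 by rewrite mxE.
have := primal_ray_value_le (u_ge0 _) xsO x_ge0 Ax_le.
move: Hd; rewrite big_sumType big_ord1 /=.
under eq_bigr do rewrite mulrN.
rewrite sumrN /primal_value -mulmx_colE; lra.
Qed.

Theorem goldman_tucker (xs : 'cV[R]_n) (ys : 'rV[R]_m) j :
  primal_optimal A b c xs -> dual_optimal A b c ys ->
  (exists2 x, primal_optimal A b c x & 0 < x j 0) \/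
  (exists2 y, dual_optimal A b c y & c 0 j < (y *m A) 0 j).
Proof.
move=> xsO ysO; set v := primal_value c xs.
(* Unknowns (y, t) >= 0 with  t c + e_j <= y A  and  y b <= t v;  a certificate
   is (x, t) >= 0 with  A x <= t b,  t v <= c x  and  x_j > 0. *)
pose a (i : 'I_n + 'I_1) (K : 'I_m + 'I_1) :=
  match i, K with
  | inl j', inl k => - A k j' | inl j', inr _ => c 0 j'
  | inr _, inl k => b k 0     | inr _, inr _ => - v end.
pose d (i : 'I_n + 'I_1) : R := if i is inl j' then - (j' == j)%:R else 0.
case: (farkas_nonneg a d) => [[z [z_ge0 Hz]] | [u [u_ge0 Hu Hd]]].
  right; pose y : 'rV[R]_m := \row_k z (inl k); set t := z (inr ord0).
  have yA_ge j' : t * c 0 j' + (j' == j)%:R <= (y *m A) 0 j'.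
    have := Hz (inl j'); rewrite big_sumType big_ord1 row_mulmxE /=.
    by under eq_bigr do rewrite mulNr; rewrite sumrN -/t; lra.
  have yb_le : dual_value b y <= t * dual_value b ys.
    have := Hz (inr ord0); rewrite big_sumType big_ord1 /= (strong_duality xsO ysO).
    by rewrite /dual_value row_mulmxE -/t -/v; lra.
  apply: (dual_ray_slack (z_ge0 _) ysO _ _ yb_le) => [k|j'|]; rewrite -/t.
  - by rewrite mxE.
  - by have := ler0n R (j' == j); have := yA_ge j'; lra.
  - by have := yA_ge j; rewrite eqxx /=; lra.
left; pose x : 'cV[R]_n := \col_j' u (inl j'); set t := u (inr ord0).
have Ax_le k : (A *m x) k 0 <= t * b k 0.
  have := Hu (inl k); rewrite big_sumType big_ord1 /=.
  by under eq_bigr do rewrite mulrN; rewrite sumrN -mulmx_colE -/t; lra.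
have cx_ge : t * v <= primal_value c x.
  have := Hu (inr ord0); rewrite big_sumType big_ord1 /=.
  by rewrite /primal_value mulmx_colE -/t; lra.
apply: (primal_ray_support (u_ge0 _) xsO _ Ax_le cx_ge) => [j'|]; rewrite mxE //.
move: Hd; rewrite big_sumType big_ord1 /= mulr0 addr0.
under eq_bigr do rewrite mulrN mulr_natr mulrb.
by rewrite sumrN -big_mkcond big_pred1_eq oppr_lt0.
Qed.

Lemma unique_optima_strictly_complementary (xs : 'cV[R]_n) (ys : 'rV[R]_m) j :
  unique_primal_optimum A b c xs -> unique_dual_optimum A b c ys ->
  Ubar xs j -> c 0 j < (ys *m A) 0 j.
Proof.
move=> [xsO xs_uniq] [ysO ys_uniq] /negP xsj_le0.
case: (goldman_tucker j xsO ysO) => [[x xO xj_gt0] | [y yO]].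
  by rewrite -(xs_uniq x xO) in xsj_le0.
by rewrite (ys_uniq y yO).
Qed.

Definition reduced_cost (y : 'rV[R]_m) j := (y *m A) 0 j - c 0 j.

Lemma reduced_cost_gap (xs x : 'cV[R]_n) (ys : 'rV[R]_m) :
  primal_optimal A b c xs -> dual_optimal A b c ys -> primal_feasible A b x ->
  \sum_(j | Ubar xs j) reduced_cost ys j * x j 0 <=
  primal_value c xs - primal_value c x.
Proof.
move=> xsO ysO xF; have [[ysA_ge ys_ge0] _] := ysO.
apply: (@le_trans _ _ (\sum_j reduced_cost ys j * x j 0)).
  rewrite [leRHS](bigID (Ubar xs)) /= lerDl; apply: sumr_ge0 => j _.
  by apply: mulr_ge0; [rewrite subr_ge0 | case: xF].
rewrite -(strong_duality xsO ysO) /reduced_cost /primal_value.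
under eq_bigr do rewrite mulrBl.
rewrite sumrB [(c *m x) 0 0]mxE lerD2r.
by apply: le_trans (mulmx_le_dual_value xF ys_ge0); rewrite [leRHS]mxE.
Qed.

Lemma betaD_eq0 (xs : 'cV[R]_n) (ys : 'rV[R]_m) :
  Ubar xs =1 xpred0 -> betaD A c xs ys = 0.
Proof.
move=> Ubar0; rewrite /betaD; case E: (enum (Ubar xs)) => [//|j s].
have /negP[] : ~~ Ubar xs j by rewrite Ubar0.
by rewrite -[Ubar xs j]/(j \in Ubar xs) -mem_enum E mem_head.
Qed.

Lemma betaDE (xs : 'cV[R]_n) (ys : 'rV[R]_m) :
  [seq (ys *m col i A) 0 0 - c 0 i | i <- enum (Ubar xs)] =
  map (reduced_cost ys) (enum (Ubar xs)).
Proof.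
apply: eq_map => j; rewrite /reduced_cost !mxE.
by congr (_ - _); apply: eq_bigr => k _; rewrite mxE.
Qed.

Lemma betaD_le (xs : 'cV[R]_n) (ys : 'rV[R]_m) j :
  Ubar xs j -> betaD A c xs ys <= reduced_cost ys j.
Proof.
move=> Uj; rewrite /betaD betaDE.
have : reduced_cost ys j \in map (reduced_cost ys) (enum (Ubar xs)).
  by rewrite map_f // mem_enum.
by case: (enum _) => [//|i s] /=; exact: foldr_min_le.
Qed.

Lemma betaD_mem (xs : 'cV[R]_n) (ys : 'rV[R]_m) j :
  Ubar xs j -> exists2 i, Ubar xs i & betaD A c xs ys = reduced_cost ys i.
Proof.
move=> Uj; rewrite /betaD betaDE.
case E: (enum (Ubar xs)) => [|i s] /=.
  by move: Uj; rewrite -[Ubar xs j]/(j \in Ubar xs) -mem_enum E.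
have := foldr_min_mem (reduced_cost ys i) (map (reduced_cost ys) s).
by rewrite -map_cons -E => /mapP[k]; rewrite mem_enum => Uk ->; exists k.
Qed.

End LinearProgram.

Theorem mainTheorem14 (R : realType) (m n : nat)
  (A : 'M[R]_(m, n)) (b : 'cV[R]_m) (c : 'rV[R]_n)
  (xs : 'cV[R]_n) (ys : 'rV[R]_m) :
  unique_primal_optimum A b c xs ->
  unique_dual_optimum A b c ys ->
  forall x : 'cV[R]_n, primal_feasible A b x ->
  norm_restr xs x <= (primal_value c xs - primal_value c x) / betaD A c xs ys.
Proof.
move=> xsU ysU x xF; case: (xsU) (ysU) (xF) => [xsO _] [ysO _] [_ x_ge0].
have [j Uj | Ubar0] := pickP (Ubar xs); last first.
  by rewrite betaD_eq0 // invr0 mulr0 /norm_restr big_pred0 ?sqrtr0.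
have [i Ui beta_eq] := betaD_mem A c ys Uj.
have beta_gt0 : 0 < betaD A c xs ys.
  by rewrite beta_eq subr_gt0 (unique_optima_strictly_complementary xsU ysU).
rewrite ler_pdivlMr //; apply: le_trans (reduced_cost_gap xsO ysO xF).
have := sqrt_sum_sqr_le_sum (fun j _ => x_ge0 j) : norm_restr xs x <= _.
move/(ler_wpM2r (ltW beta_gt0))/le_trans; apply.
rewrite mulr_suml; apply: ler_sum => k Uk.
by rewrite mulrC ler_wpM2r // betaD_le.
Qed.
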